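(* Let $K=(S,L,\to)$ be a Kripke structure and $s,t\in S$. Then $s\leftrightarrow_b^{\Delta}t$ if and only if for every $\mathsf{CTL}_\infty$ formula $\varphi$: $s\models\varphi\iff t\models\varphi$.
   Context: Fix a set $\mathbf{AP}$ of atomic propositions. A Kripke structure is a triple $K=(S,L,\to)$ with $S$ a set of states, $L:S\to\mathcal{P}(\mathbf{AP})$ and $\to\subseteq S\times S$ (not required to be total). A finite path from $s$ is a sequence $s_0,\dots,s_n$ with $s_0=s$ and $s_k\to s_{k+1}$ for $0\le k<n$; an infinite path from $s$ is a sequence $s_0,s_1,\dots$ with $s_0=s$ and $s_k\to s_{k+1}$ for all $k$. A colouring is a function $\mathcal{C}$ from $S$ into an arbitrary set of colours. For a path $\pi=s_0,s_1,\dots$, $\mathcal{C}(\pi)$ is obtained from $\mathcal{C}(s_0),\mathcal{C}(s_1),\dots$ by contracting every maximal (finite or infinite) block of consecutive equal colours to a single colour. The $\mathcal{C}(\pi)$ with $\pi$ a path from $s$ are the $\mathcal{C}$-coloured traces of $s$; $\mathcal{C}(\pi)$ is a divergent $\mathcal{C}$-coloured trace of $s$ if $\pi$ is an infinite path from $s$ and $\mathcal{C}(\pi)$ is finite. A colouring is consistent if any two states of the same colour have the same $L$-label and the same $\mathcal{C}$-coloured traces; a consistent colouring preserves divergence if any two states of the same colour have the same divergent $\mathcal{C}$-coloured traces. $s\leftrightarrow_b^{\Delta}t$ iff there is a consistent, divergence preserving colouring $\mathcal{C}$ with $\mathcal{C}(s)=\mathcal{C}(t)$. $\mathsf{CTL}_\infty$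 formulas: $\varphi::=p\mid\neg\varphi\mid\bigwedge\Phi'\mid\exists(\varphi\,\mathsf{U}\,\varphi)\mid\exists^\infty\mathsf{G}\varphi$, with $p\in\mathbf{AP}$ and $\Phi'$ an arbitrary set of formulas. Semantics: $s\models p$ iff $p\in L(s)$; negation and conjunction as usual; $s\models\exists(\varphi\,\mathsf{U}\,\varphi')$ iff there is a finite path $s_0,\dots,s_k$ from $s$ with $s_k\models\varphi'$ and $s_i\models\varphi$ for all $0\le i<k$; $s\models\exists^\infty\mathsf{G}\varphi$ iff there is an infinite path from $s$ all of whose states satisfy $\varphi$. *)

From Stdlib Require Import List Arith.
Set Implicit Arguments.

Inductive trace (Col : Type) : Type :=
| TFin : list Col -> trace Col
| TInf : (nat -> Col) -> trace Col.

(* Length of a path/sequence: [Some n] = positions 0..n (finite),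
   [None] = infinite. *)
Definition in_dom (len : option nat) (k : nat) : Prop :=
  match len with Some n => k <= n | None => True end.

Definition tr_at (Col : Type) (w : trace Col) (j : nat) : option Col :=
  match w with TFin l => nth_error l j | TInf f => Some (f j) end.

Definition tr_pos (Col : Type) (w : trace Col) (j : nat) : Prop :=
  match w with TFin l => j < length l | TInf _ => True end.

(* [contracts c len w]: w is obtained from the colour sequence
   c 0, c 1, ... (of length [len]) by contracting every maximal block of
   consecutive equal colours to a single colour.  [g k] is the index in
   [w] of the block containing position [k]. *)
Definition contracts (Col : Type) (c : nat -> Col) (len : option nat)
  (w : trace Col) : Prop :=
  exists g : nat -> nat,
    g 0 = 0 /\
    (forall k, in_dom len (S k) ->
       (c (S k) = c k /\ g (S k) = g k) \/
       (c (S k) <> c k /\ g (S k) = S (g k))) /\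
    (forall k, in_dom len k -> tr_at w (g k) = Some (c k)) /\
    (forall j, tr_pos w j -> exists k, in_dom len k /\ g k = j).

Definition path (St : Type) (R : St -> St -> Prop) (s : St)
  (len : option nat) (pi : nat -> St) : Prop :=
  pi 0 = s /\ forall k, in_dom len (S k) -> R (pi k) (pi (S k)).

Section Colourings.
Variables (AP St : Type) (L : St -> AP -> Prop) (R : St -> St -> Prop).

Definition ctrace (Col : Type) (C : St -> Col) (s : St) (w : trace Col) : Prop :=
  exists len pi, path R s len pi /\ contracts (fun k => C (pi k)) len w.

Definition divtrace (Col : Type) (C : St -> Col) (s : St) (w : trace Col) : Prop :=
  exists pi, path R s None pi /\ contracts (fun k => C (pi k)) None w /\
             exists l, w = TFin l.

Definition consistent (Col : Type) (C : St -> Col) : Prop :=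
  forall s t, C s = C t ->
    (forall p, L s p <-> L t p) /\ (forall w, ctrace C s w <-> ctrace C t w).

Definition div_preserving (Col : Type) (C : St -> Col) : Prop :=
  consistent C /\
  forall s t, C s = C t -> forall w, divtrace C s w <-> divtrace C t w.

Definition bbisim_div (s t : St) : Prop :=
  exists (Col : Type) (C : St -> Col), div_preserving C /\ C s = C t.

End Colourings.

Inductive form (AP : Type) : Type :=
| FAtom : AP -> form AP
| FNeg : form AP -> form AP
| FConj : forall I : Type, (I -> form AP) -> form AP
| FEU : form AP -> form AP -> form AP
| FEG : form AP -> form AP.

Fixpoint sat (AP St : Type) (L : St -> AP -> Prop) (R : St -> St -> Prop)
  (phi : form AP) (s : St) {struct phi} : Prop :=
  match phi with
  | FAtom p => L s p
  | FNeg psi => ~ sat L R psi s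
  | @FConj _ Ix f => forall i : Ix, sat L R (f i) s
  | FEU phi1 phi2 =>
      exists n pi, path R s (Some n) pi /\ sat L R phi2 (pi n) /\
                   forall i, i < n -> sat L R phi1 (pi i)
  | FEG psi =>
      exists pi, path R s None pi /\ forall k, sat L R psi (pi k)
  end.

From Stdlib Require Import List Arith Lia Classical ClassicalEpsilon FunctionalExtensionality PropExtensionality.
Set Implicit Arguments.
Unset Strict Implicit.

(* Soundness: every formula is invariant under a consistent, divergence-preserving
   colouring.  A witness path for an until or a diverging globally is contracted to
   its coloured trace; consistency (resp. divergence preservation) yields a path
   from the other state with the same trace, and matching the blocks of the two
   contractions transports the subformulas along it.

   Completeness: colour each state by its CTL_infinity theory.  Since conjunctions
   are infinitary, every theory class is defined by a single characteristic formula
   chi_x, so E(chi_x U chi_z) and E^inf G chi_x let an equivalent state imitate, one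
   colour block at a time, any path that stays in the class of x and then enters
   that of z, or stays there forever.  Chaining these imitations (by recursion along
   a finite trace, by dependent choice along an infinite one) transfers coloured and
   divergent traces between equivalent states. *)

Lemma in_dom_le len k k' : in_dom len k' -> k <= k' -> in_dom len k.
Proof. destruct len; simpl; lia. Qed.

Lemma in_dom_zero len : in_dom len 0.
Proof. destruct len; simpl; lia. Qed.

Lemma in_dom_pred len k : in_dom len (S k) -> in_dom len k.
Proof. destruct len; simpl; lia. Qed.

Lemma in_dom_shift len m k : in_dom len m ->
  in_dom (option_map (fun n => n - m) len) k <-> in_dom len (m + k).
Proof. destruct len; simpl; lia. Qed.

Lemma in_dom_add len n k :
  in_dom (option_map (Nat.add n) len) k <-> k <= n \/ in_dom len (k - n).
Proof. destruct len; simpl; lia. Qed.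

Lemma tr_at_pos (Col : Type) (w : trace Col) j a : tr_at w j = Some a -> tr_pos w j.
Proof. destruct w; simpl; auto. intro H. apply nth_error_Some. congruence. Qed.

Lemma ex_least (P : nat -> Prop) :
  (exists n, P n) -> exists n, P n /\ forall k, k < n -> ~ P k.
Proof.
  intros [n Hn]. induction n as [n IH] using (well_founded_induction lt_wf).
  destruct (classic (exists k, k < n /\ P k)) as [[k [Hk Pk]] | Hno].
  - exact (IH k Hk Pk).
  - exists n. split; [exact Hn|]. intros k Hk Pk. apply Hno. eauto.
Qed.

Definition contracts_by (Col : Type) (c : nat -> Col) (len : option nat)
  (w : trace Col) (g : nat -> nat) : Prop :=
  g 0 = 0 /\
  (forall k, in_dom len (S k) ->
     (c (S k) = c k /\ g (S k) = g k) \/ (c (S k) <> c k /\ g (S k) = S (g k))) /\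
  (forall k, in_dom len k -> tr_at w (g k) = Some (c k)) /\
  (forall j, tr_pos w j -> exists k, in_dom len k /\ g k = j).

Lemma contracts_by_ext (Col : Type) (c c' : nat -> Col) len w g :
  (forall k, in_dom len k -> c k = c' k) -> contracts_by c len w g -> contracts_by c' len w g.
Proof.
  intros Hcc' [H0 [Hs [Ht Hsur]]]. split; [exact H0|]. split; [|split; [|exact Hsur]].
  - intros k Hk. rewrite <- !Hcc' by (auto using in_dom_pred).
    exact (Hs k Hk).
  - intros k Hk. rewrite <- Hcc' by exact Hk. exact (Ht k Hk).
Qed.

Lemma contracts_by_const (Col : Type) (c : nat -> Col) len a :
  (forall k, in_dom len k -> c k = a) -> contracts_by c len (TFin (a :: nil)) (fun _ => 0).
Proof.
  intros Ha. split; [reflexivity|]. split; [|split].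
  - intros k Hk. left. rewrite !Ha by (auto using in_dom_pred).
    auto.
  - intros k Hk. simpl. rewrite Ha; auto.
  - intros j Hj. simpl in Hj. exists 0. split; [apply in_dom_zero | lia].
Qed.

Section ContractionFacts.
Variables (Col : Type) (c : nat -> Col) (len : option nat) (w : trace Col) (g : nat -> nat).
Hypothesis Hg : contracts_by c len w g.

Lemma contracts_by_mono k k' : k <= k' -> in_dom len k' -> g k <= g k'.
Proof.
  destruct Hg as [_ [Hs _]]. induction 1 as [|k' Hkk' IH]; intros Hk'; [lia|].
  specialize (IH (in_dom_pred Hk')).
  destruct (Hs k' Hk') as [[_ E] | [_ E]]; lia.
Qed.

Lemma contracts_by_le k : in_dom len k -> g k <= k.
Proof.
  destruct Hg as [H0 [Hs _]]. induction k as [|k IH]; intros Hk; [lia|].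
  specialize (IH (in_dom_pred Hk)).
  destruct (Hs k Hk) as [[_ E] | [_ E]]; lia.
Qed.

Lemma contracts_by_adjacent j a b :
  tr_at w j = Some a -> tr_at w (S j) = Some b -> a <> b.
Proof.
  destruct Hg as [H0 [Hs [Ht Hsur]]]. intros Ha Hb.
  destruct (Hsur (S j) (tr_at_pos Hb)) as [k [Hk Hgk]].
  induction k as [|k IH]; [congruence|].
  assert (Hk' := in_dom_pred Hk).
  destruct (Hs k Hk) as [[_ E] | [Hne E]].
  - apply IH; [exact Hk' | congruence].
  - pose proof (Ht _ Hk) as A. pose proof (Ht _ Hk') as B.
    rewrite Hgk in A. replace (g k) with j in B by lia. congruence.
Qed.

Lemma contracts_by_same_block (c' : nat -> Col) len' g' k k' :
  contracts_by c' len' w g' -> in_dom len k -> in_dom len' k' -> g k = g' k' -> c k = c' k'.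
Proof.
  intros [_ [_ [Ht' _]]] Hk Hk' E. destruct Hg as [_ [_ [Ht _]]].
  pose proof (Ht k Hk) as A. pose proof (Ht' k' Hk') as B. congruence.
Qed.

Lemma contracts_by_match (c' : nat -> Col) len' g' k' :
  contracts_by c' len' w g' -> in_dom len' k' ->
  exists k, in_dom len k /\ g k = g' k' /\ c k = c' k'.
Proof.
  intros Hg' Hk'. pose proof Hg' as [_ [_ [Ht' _]]]. pose proof Hg as [_ [_ [_ Hsur]]].
  destruct (Hsur _ (tr_at_pos (Ht' k' Hk'))) as [k [Hk E]].
  exists k. split; [exact Hk|]. split; [exact E|].
  exact (contracts_by_same_block Hg' Hk Hk' E).
Qed.

End ContractionFacts.

Lemma contracts_by_fin_TInf (Col : Type) (c : nat -> Col) n f g :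
  ~ contracts_by c (Some n) (TInf f) g.
Proof.
  intros Hg. pose proof Hg as [_ [_ [_ Hsur]]].
  destruct (Hsur (S n) I) as [k [Hk Hgk]].
  pose proof (contracts_by_le Hg Hk). simpl in Hk. lia.
Qed.

Section Blocks.
Variables (Col : Type) (c : nat -> Col).

Fixpoint blocks k : nat :=
  match k with
  | 0 => 0
  | S k' => if excluded_middle_informative (c (S k') = c k') then blocks k' else S (blocks k')
  end.

Lemma blocks_step k :
  (c (S k) = c k /\ blocks (S k) = blocks k) \/ (c (S k) <> c k /\ blocks (S k) = S (blocks k)).
Proof. simpl. destruct (excluded_middle_informative (c (S k) = c k)); auto. Qed.

Lemma blocks_mono k k' : k <= k' -> blocks k <= blocks k'.
Proof. induction 1 as [|k' _ IH]; [lia|]. destruct (blocks_step k') as [[_ E] | [_ E]]; lia. Qed.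

Lemma blocks_colour k k' : k <= k' -> blocks k = blocks k' -> c k = c k'.
Proof.
  induction 1 as [|k' Hkk' IH]; intros E; [reflexivity|].
  pose proof (blocks_mono Hkk').
  destruct (blocks_step k') as [[Ec E'] | [_ E']]; [|lia].
  rewrite Ec. apply IH. lia.
Qed.

Lemma blocks_reach N j : j <= blocks N -> exists k, k <= N /\ blocks k = j.
Proof.
  induction N as [|N IH]; intros Hj.
  - exists 0. simpl in *. split; lia.
  - destruct (Nat.eq_dec j (blocks (S N))) as [-> | Hne].
    + exists (S N). split; auto.
    + assert (j <= blocks N) by (destruct (blocks_step N) as [[_ E] | [_ E]]; lia).
      destruct (IH H) as [k [Hk E]]. exists k. split; [lia | exact E].
Qed.

Definition block_colour j : Col := c (epsilon (inhabits 0) (fun k => blocks k = j)).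

Lemma block_colour_blocks k : block_colour (blocks k) = c k.
Proof.
  unfold block_colour.
  set (k' := epsilon _ _). assert (E : blocks k' = blocks k) by (apply epsilon_spec; eauto).
  destruct (Nat.le_ge_cases k k'); [symmetry|]; apply blocks_colour; auto.
Qed.

Lemma contracts_by_blocks_bounded len N :
  in_dom len N -> (forall k, in_dom len k -> blocks k <= blocks N) ->
  contracts_by c len (TFin (map block_colour (seq 0 (S (blocks N))))) blocks.
Proof.
  intros HN Hbound. split; [reflexivity|]. split; [|split].
  - intros k _. apply blocks_step.
  - intros k Hk. unfold tr_at. rewrite nth_error_map, nth_error_seq.
    destruct (Nat.ltb_spec (blocks k) (S (blocks N))) as [_ | Hlt].
    + simpl. f_equal. apply block_colour_blocks.
    + specialize (Hbound k Hk). lia.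
  - intros j Hj. simpl in Hj. rewrite length_map, length_seq in Hj.
    destruct (@blocks_reach N j) as [k [Hk E]]; [lia|].
    exists k. split; [exact (in_dom_le HN Hk) | exact E].
Qed.

Lemma contracts_by_blocks_unbounded :
  (forall j, exists k, j <= blocks k) -> contracts_by c None (TInf block_colour) blocks.
Proof.
  intros Hunb. split; [reflexivity|]. split; [|split].
  - intros k _. apply blocks_step.
  - intros k _. simpl. f_equal. apply block_colour_blocks.
  - intros j _. destruct (Hunb j) as [N HN]. destruct (blocks_reach HN) as [k [_ E]].
    exists k. split; [exact I | exact E].
Qed.

Lemma contracts_exists len : exists w, contracts c len w.
Proof.
  destruct len as [n|].
  - eexists. exists blocks. apply contracts_by_blocks_bounded with (N := n); [simpl; lia|].
    intros k Hk. apply blocks_mono. exact Hk.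
  - destruct (classic (exists N, forall k, blocks k <= blocks N)) as [[N HN] | HN].
    + eexists. exists blocks. apply contracts_by_blocks_bounded with (N := N); auto. exact I.
    + eexists. exists blocks. apply contracts_by_blocks_unbounded.
      intro j. induction j as [|j [k Hk]]; [exists 0; lia|].
      apply not_ex_all_not with (n := k) in HN. apply not_all_ex_not in HN.
      destruct HN as [k' Hk']. exists k'. lia.
Qed.

End Blocks.

Section Paths.
Variables (St : Type) (R : St -> St -> Prop).

Lemma path_prefix x len pi m : path R x len pi -> in_dom len m -> path R x (Some m) pi.
Proof.
  intros [H0 Hs] Hm. split; [exact H0|]. intros k Hk. apply Hs. exact (in_dom_le Hm Hk).
Qed.

Lemma path_shift x len pi m : path R x len pi -> in_dom len m ->
  path R (pi m) (option_map (fun n => n - m) len) (fun k => pi (m + k)).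
Proof.
  intros [_ Hs] Hm. split; [f_equal; lia|].
  intros k Hk. apply (in_dom_shift (S k) Hm) in Hk. rewrite Nat.add_succ_r in *. auto.
Qed.

Definition splice (n : nat) (rho sig : nat -> St) (k : nat) : St :=
  if k <? n then rho k else sig (k - n).

Lemma path_splice z n rho len sig :
  path R z (Some n) rho -> path R (rho n) len sig ->
  path R z (option_map (Nat.add n) len) (splice n rho sig).
Proof.
  intros [Hr0 Hrs] [Hs0 Hss]. unfold splice. split.
  - destruct (Nat.ltb_spec 0 n); [exact Hr0|].
    replace n with 0 in * by lia. simpl. congruence.
  - intros k Hk. apply in_dom_add in Hk.
    destruct (Nat.ltb_spec k n), (Nat.ltb_spec (S k) n).
    + apply Hrs. simpl. lia.
    + replace (S k - n) with 0 by lia. rewrite Hs0. replace n with (S k) by lia.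
      apply Hrs. simpl. lia.
    + lia.
    + replace (S k - n) with (S (k - n)) by lia. apply Hss.
      destruct Hk as [Hk | Hk]; [lia|]. replace (S (k - n)) with (S k - n) by lia. exact Hk.
Qed.

Lemma splice_before n rho sig k : k < n -> splice n rho sig k = rho k.
Proof. intros Hk. unfold splice. destruct (Nat.ltb_spec k n); [reflexivity | lia]. Qed.

Lemma splice_after n rho sig k : splice n rho sig (n + k) = sig k.
Proof. unfold splice. destruct (Nat.ltb_spec (n + k) n); [lia|]. f_equal. lia. Qed.

End Paths.

Lemma contracts_by_cons (Col : Type) (c : nat -> Col) n len a l g :
  0 < n -> (forall i, i < n -> c i = a) -> c n <> a ->
  contracts_by (fun k => c (n + k)) len (TFin l) g ->
  contracts_by c (option_map (Nat.add n) len) (TFin (a :: l))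
    (fun k => if k <? n then 0 else S (g (k - n))).
Proof.
  intros Hn Ha Hna [G0 [Gs [Gt Gsur]]].
  assert (Htail : forall k, n <= k -> in_dom (option_map (Nat.add n) len) k -> in_dom len (k - n)).
  { intros k Hk Hd. apply in_dom_add in Hd. destruct Hd as [Hd | Hd]; [|exact Hd].
    replace (k - n) with 0 by lia. apply in_dom_zero. }
  split; [|split; [|split]].
  - destruct (Nat.ltb_spec 0 n); [reflexivity | lia].
  - intros k Hk. destruct (Nat.ltb_spec k n), (Nat.ltb_spec (S k) n).
    + left. rewrite !Ha by lia. auto.
    + right. replace n with (S k) in * by lia. rewrite Nat.sub_diag, G0, (Ha k) by lia. auto.
    + lia.
    + destruct (Nat.le_exists_sub n k) as [m [-> _]]; [lia|].
      assert (Hd : in_dom len (S m)).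
      { replace (S m) with (S (m + n) - n) by lia. apply Htail; [lia | exact Hk]. }
      replace (S (m + n) - n) with (S m) by lia. replace (m + n - n) with m by lia.
      replace (S (m + n)) with (n + S m) by lia. replace (m + n) with (n + m) by lia.
      destruct (Gs _ Hd) as [[E1 E2] | [E1 E2]]; [left | right]; split; congruence.
  - intros k Hk. destruct (Nat.ltb_spec k n).
    + simpl. rewrite Ha; auto.
    + simpl. replace k with (n + (k - n)) at 2 by lia. apply Gt, Htail; auto.
  - intros [|j] Hj.
    + exists 0. split; [apply in_dom_zero|]. destruct (Nat.ltb_spec 0 n); [auto | lia].
    + simpl in Hj. destruct (Gsur j ltac:(simpl; lia)) as [k [Hk Hgk]].
      exists (n + k). split.
      * apply in_dom_add. right. replace (n + k - n) with k by lia. exact Hk.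
      * destruct (Nat.ltb_spec (n + k) n); [lia|]. replace (n + k - n) with k by lia. congruence.
Qed.

Section Soundness.
Variables (AP St Col : Type) (L : St -> AP -> Prop) (R : St -> St -> Prop) (C : St -> Col).

Lemma until_path_transfer x y n pi :
  consistent L R C -> C x = C y -> path R x (Some n) pi ->
  exists m pi', path R y (Some m) pi' /\ C (pi' m) = C (pi n) /\
    forall i, i < m -> exists k, k < n /\ C (pi' i) = C (pi k).
Proof.
  intros HC Hxy Hpi.
  destruct (contracts_exists (fun k => C (pi k)) (Some n)) as [w [g Hg]].
  assert (Hx : ctrace R C x w) by (exists (Some n), pi; split; [exact Hpi | exists g; exact Hg]).
  destruct (proj1 (proj2 (HC x y Hxy) w) Hx) as [len' [pi' [Hpi' [g' Hg']]]].
  pose proof Hg as [_ [_ [Gt _]]]. pose proof Hg' as [_ [_ [_ Gsur']]].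
  assert (Hn : in_dom (Some n) n) by (simpl; lia).
  destruct (@ex_least (fun j => in_dom len' j /\ g' j = g n) (Gsur' _ (tr_at_pos (Gt n Hn))))
    as [m [[Hm Hgm] Hleast]].
  exists m, pi'. split; [exact (path_prefix Hpi' Hm)|]. split.
  - symmetry. exact (contracts_by_same_block Hg Hg' Hn Hm (eq_sym Hgm)).
  - intros i Hi. assert (Hi' : in_dom len' i) by exact (in_dom_le Hm (Nat.lt_le_incl _ _ Hi)).
    destruct (contracts_by_match Hg Hg' Hi') as [k [Hk [Hgk Hc]]].
    exists k. split; [|symmetry; exact Hc].
    assert (k <> n) by (intros ->; apply (Hleast i Hi); split; auto).
    simpl in Hk. lia.
Qed.

Lemma infinite_path_transfer x y pi :
  div_preserving L R C -> C x = C y -> path R x None pi ->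
  exists sig, path R y None sig /\ forall i, exists k, C (sig i) = C (pi k).
Proof.
  intros [HC Hdiv] Hxy Hpi.
  destruct (contracts_exists (fun k => C (pi k)) None) as [w [g Hg]].
  assert (Hy : exists sig g', path R y None sig /\ contracts_by (fun k => C (sig k)) None w g').
  { destruct w as [l | f].
    - assert (Hx : divtrace R C x (TFin l)).
      { exists pi. split; [exact Hpi|]. split; [exists g; exact Hg | exists l; reflexivity]. }
      destruct (proj1 (Hdiv x y Hxy _) Hx) as [sig [Hsig [[g' Hg'] _]]]. eauto.
    - assert (Hx : ctrace R C x (TInf f)).
      { exists None, pi. split; [exact Hpi | exists g; exact Hg]. }
      destruct (proj1 (proj2 (HC x y Hxy) _) Hx) as [[n|] [sig [Hsig [g' Hg']]]].
      + exfalso. exact (contracts_by_fin_TInf Hg').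
      + eauto. }
  destruct Hy as [sig [g' [Hsig Hg']]]. exists sig. split; [exact Hsig|].
  intro i. destruct (contracts_by_match Hg Hg' (k' := i) I) as [k [_ [_ Hc]]]. eauto.
Qed.

Lemma sat_colour_invariant phi :
  div_preserving L R C -> forall x y, C x = C y -> sat L R phi x -> sat L R phi y.
Proof.
  intros HC. pose proof (proj1 HC) as Hcons.
  induction phi as [p | psi IH | I f IH | phi1 IH1 phi2 IH2 | psi IH];
    intros x y Hxy Hx; simpl in *.
  - exact (proj1 (proj1 (Hcons x y Hxy) p) Hx).
  - intro Hy. exact (Hx (IH y x (eq_sym Hxy) Hy)).
  - intro i. exact (IH i x y Hxy (Hx i)).
  - destruct Hx as [n [pi [Hpi [H2 H1]]]].
    destruct (until_path_transfer Hcons Hxy Hpi) as [m [pi' [Hpi' [Hlast Hbefore]]]].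
    exists m, pi'. split; [exact Hpi'|]. split.
    + exact (IH2 _ _ (eq_sym Hlast) H2).
    + intros i Hi. destruct (Hbefore i Hi) as [k [Hk Hc]].
      exact (IH1 _ _ (eq_sym Hc) (H1 k Hk)).
  - destruct Hx as [pi [Hpi Hall]].
    destruct (infinite_path_transfer HC Hxy Hpi) as [sig [Hsig Hc]].
    exists sig. split; [exact Hsig|]. intro i. destruct (Hc i) as [k Hk].
    exact (IH _ _ (eq_sym Hk) (Hall k)).
Qed.

End Soundness.

Section Cursor.
Variable len : nat -> nat.
Hypothesis len_pos : forall j, 0 < len j.

(* Position [k] of the concatenation of blocks of lengths [len 0], [len 1], ...
   is offset [i] of block [j] when [cursor k = (j, i)]. *)
Fixpoint cursor (k : nat) : nat * nat :=
  match k with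
  | 0 => (0, 0)
  | S k => let (j, i) := cursor k in if S i <? len j then (j, S i) else (S j, 0)
  end.

Lemma cursor_lt k j i : cursor k = (j, i) -> i < len j.
Proof.
  revert j i. induction k as [|k IH]; intros j i Hk; simpl in Hk.
  - injection Hk as <- <-. apply len_pos.
  - destruct (cursor k) as [j' i'].
    destruct (Nat.ltb_spec (S i') (len j')); injection Hk as <- <-; auto.
Qed.

Lemma cursor_succ k j i : cursor k = (j, i) ->
  (S i < len j /\ cursor (S k) = (j, S i)) \/ (S i = len j /\ cursor (S k) = (S j, 0)).
Proof.
  intros Hk. pose proof (cursor_lt Hk). simpl. rewrite Hk.
  destruct (Nat.ltb_spec (S i) (len j)); [left | right]; split; auto; lia.
Qed.

Lemma cursor_reaches j : exists k, cursor k = (j, 0).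
Proof.
  induction j as [|j [k Hk]]; [exists 0; reflexivity|].
  assert (Hinside : forall i, i < len j -> cursor (k + i) = (j, i)).
  { induction i as [|i IH]; intros Hi; [rewrite Nat.add_0_r; exact Hk|].
    rewrite Nat.add_succ_r. destruct (cursor_succ (IH ltac:(lia))) as [[_ E] | [E _]].
    - exact E.
    - lia. }
  pose proof (len_pos j).
  exists (S (k + (len j - 1))).
  destruct (cursor_succ (Hinside (len j - 1) ltac:(lia))) as [[? _] | [_ E]]; [lia | exact E].
Qed.

End Cursor.

Section Segments.
Variables (St Col : Type) (R : St -> St -> Prop) (C : St -> Col) (f : nat -> Col).
Variables (P : nat -> St -> Prop) (y : St) (seg : nat -> St -> nat * (nat -> St)).
Hypothesis f_adjacent : forall j, f (S j) <> f j.
Hypothesis P_start : P 0 y.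
Hypothesis seg_spec : forall j z, P j z ->
  0 < fst (seg j z) /\ path R z (Some (fst (seg j z))) (snd (seg j z)) /\
  (forall i, i < fst (seg j z) -> C (snd (seg j z) i) = f j) /\
  P (S j) (snd (seg j z) (fst (seg j z))).

Fixpoint seg_start (j : nat) : St :=
  match j with
  | 0 => y
  | S j => snd (seg j (seg_start j)) (fst (seg j (seg_start j)))
  end.

Lemma seg_start_spec j : P j (seg_start j).
Proof. induction j as [|j IH]; [exact P_start | exact (proj2 (proj2 (proj2 (seg_spec IH))))]. Qed.

Definition seg_len (j : nat) : nat := fst (seg j (seg_start j)).
Definition seg_path (j : nat) : nat -> St := snd (seg j (seg_start j)).

Lemma seg_len_pos j : 0 < seg_len j.
Proof. exact (proj1 (seg_spec (seg_start_spec j))). Qed.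

Definition concat (k : nat) : St := let (j, i) := cursor seg_len k in seg_path j i.

Lemma concat_path : path R y None concat.
Proof.
  split.
  - exact (proj1 (proj1 (proj2 (seg_spec (seg_start_spec 0))))).
  - intros k _. unfold concat. destruct (cursor seg_len k) as [j i] eqn:Hk.
    destruct (seg_spec (seg_start_spec j)) as [_ [[_ Hstep] _]].
    destruct (cursor_succ seg_len_pos Hk) as [[Hi ->] | [Hi ->]].
    + apply Hstep. unfold seg_len in Hi. simpl. lia.
    + destruct (seg_spec (seg_start_spec (S j))) as [_ [[Hs0 _] _]].
      unfold seg_path. rewrite Hs0. simpl. unfold seg_len in Hi. rewrite <- Hi.
      apply Hstep. simpl. lia.
Qed.

Lemma concat_contracts :
  contracts_by (fun k => C (concat k)) None (TInf f) (fun k => fst (cursor seg_len k)).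
Proof.
  assert (Hcol : forall k, C (concat k) = f (fst (cursor seg_len k))).
  { intro k. unfold concat. destruct (cursor seg_len k) as [j i] eqn:Hk.
    apply (seg_spec (seg_start_spec j)). exact (cursor_lt seg_len_pos Hk). }
  split; [reflexivity|]. split; [|split].
  - intros k _. rewrite !Hcol. destruct (cursor seg_len k) as [j i] eqn:Hk.
    destruct (cursor_succ seg_len_pos Hk) as [[_ ->] | [_ ->]]; simpl; auto.
  - intros k _. simpl. rewrite Hcol. reflexivity.
  - intros j _. destruct (cursor_reaches seg_len_pos j) as [k Hk].
    exists k. split; [exact I | rewrite Hk; reflexivity].
Qed.

End Segments.

Lemma path_of_segments (St Col : Type) (R : St -> St -> Prop) (C : St -> Col)
  (f : nat -> Col) (P : nat -> St -> Prop) y :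
  (forall j, f (S j) <> f j) -> P 0 y ->
  (forall j z, P j z -> exists n rho, 0 < n /\ path R z (Some n) rho /\
     (forall i, i < n -> C (rho i) = f j) /\ P (S j) (rho n)) ->
  exists pi g, path R y None pi /\ contracts_by (fun k => C (pi k)) None (TInf f) g.
Proof.
  intros Hf Hy Hstep.
  destruct (choice (fun (jz : nat * St) (p : nat * (nat -> St)) =>
    P (fst jz) (snd jz) -> 0 < fst p /\ path R (snd jz) (Some (fst p)) (snd p) /\
      (forall i, i < fst p -> C (snd p i) = f (fst jz)) /\ P (S (fst jz)) (snd p (fst p))))
    as [seg Hseg].
  { intros [j z]. destruct (classic (P j z)) as [Hjz | Hjz].
    - destruct (Hstep j z Hjz) as [n [rho Hrho]]. exists (n, rho). auto.
    - exists (0, fun _ => z). intro. contradiction. }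
  set (seg' := fun j z => seg (j, z)).
  pose proof (fun j z => Hseg (j, z)) as Hseg'. cbn [fst snd] in Hseg'.
  exists (concat y seg'), (fun k => fst (cursor (seg_len y seg') k)).
  split; [exact (concat_path Hy Hseg') | exact (concat_contracts Hf Hy Hseg')].
Qed.

Lemma skipn_nth_error (A : Type) (l : list A) j a :
  nth_error l j = Some a -> skipn j l = a :: skipn (S j) l.
Proof.
  revert j. induction l as [|b l IH]; intros [|j] H; simpl in *; try discriminate.
  - injection H as ->. reflexivity.
  - exact (IH j H).
Qed.

Section Transfer.
Variables (St Col : Type) (R : St -> St -> Prop) (C : St -> Col).
Hypothesis until_transfer : forall x y m pi, C x = C y -> path R x (Some m) pi ->
  (forall i, i < m -> C (pi i) = C x) ->
  exists n rho, path R y (Some n) rho /\ C (rho n) = C (pi m) /\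
    forall i, i < n -> C (rho i) = C x.
Hypothesis diverge_transfer : forall x y pi, C x = C y -> path R x None pi ->
  (forall k, C (pi k) = C x) ->
  exists sig, path R y None sig /\ forall k, C (sig k) = C x.

Section Tracking.
Variables (x y : St) (len : option nat) (pi : nat -> St) (w : trace Col) (g : nat -> nat).
Hypotheses (Hxy : C x = C y) (Hpi : path R x len pi)
  (Hg : contracts_by (fun k => C (pi k)) len w g).

Definition tracks (j : nat) (z : St) : Prop :=
  exists k, in_dom len k /\ g k = j /\ C (pi k) = C z.

Lemma tracks_start : tracks 0 y.
Proof.
  exists 0. split; [apply in_dom_zero|]. split; [exact (proj1 Hg)|].
  rewrite (proj1 Hpi). exact Hxy.
Qed.

Lemma tracks_colour j z : tracks j z -> tr_at w j = Some (C z).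
Proof.
  intros [k [Hk [<- Hc]]]. rewrite <- Hc. exact (proj1 (proj2 (proj2 Hg)) k Hk).
Qed.

Lemma tracks_step j z : tr_pos w (S j) -> tracks j z ->
  exists n rho, 0 < n /\ path R z (Some n) rho /\
    (forall i, i < n -> C (rho i) = C z) /\ tracks (S j) (rho n).
Proof.
  intros Hj Hz. pose proof Hz as [k [Hk [Hgk Hkz]]].
  destruct (@ex_least (fun k' => in_dom len k' /\ g k' = S j) (proj2 (proj2 (proj2 Hg)) _ Hj))
    as [k' [[Hk' Hgk'] Hleast]].
  assert (Hlt : k < k').
  { destruct (Nat.lt_ge_cases k k') as [| Hle]; [assumption|].
    pose proof (contracts_by_mono Hg Hle Hk). lia. }
  assert (Hblock : forall i, k <= i -> i < k' -> C (pi i) = C (pi k)).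
  { intros i Hki Hik'. assert (Hi : in_dom len i) by exact (in_dom_le Hk' (Nat.lt_le_incl _ _ Hik')).
    apply (contracts_by_same_block Hg Hg Hi Hk).
    pose proof (contracts_by_mono Hg Hki Hi).
    pose proof (contracts_by_mono Hg (Nat.lt_le_incl _ _ Hik') Hk').
    assert (g i <> S j) by (intro; apply (Hleast i Hik'); auto). lia. }
  assert (Hseg : path R (pi k) (Some (k' - k)) (fun i => pi (k + i))).
  { apply (path_prefix (path_shift Hpi Hk)). apply in_dom_shift; [exact Hk|].
    replace (k + (k' - k)) with k' by lia. exact Hk'. }
  destruct (until_transfer Hkz Hseg) as [n [rho [Hrho [Hend Hbefore]]]].
  { intros i Hi. apply Hblock; lia. }
  cbv beta in Hend. replace (k + (k' - k)) with k' in Hend by lia.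
  assert (Hnext : tracks (S j) (rho n)) by (exists k'; auto).
  exists n, rho. split; [|split; [exact Hrho | split; [|exact Hnext]]].
  - destruct n as [|n]; [exfalso | lia].
    apply (contracts_by_adjacent Hg (tracks_colour Hz) (tracks_colour Hnext)).
    rewrite (proj1 Hrho). reflexivity.
  - intros i Hi. rewrite (Hbefore i Hi). exact Hkz.
Qed.

Lemma tracks_last l z : w = TFin l -> tracks (length l - 1) z ->
  exists len' sig g', (len = None -> len' = None) /\ path R z len' sig /\
    contracts_by (fun k => C (sig k)) len' (TFin (C z :: nil)) g'.
Proof.
  intros Hw [k [Hk [Hgk Hkz]]]. destruct len as [m|].
  - exists (Some 0), (fun _ => z), (fun _ => 0). split; [discriminate|]. split.
    + split; [reflexivity|]. intros i Hi. simpl in Hi. lia.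
    + apply contracts_by_const. reflexivity.
  - assert (Hstay : forall i, C (pi (k + i)) = C (pi k)).
    { intro i. apply (contracts_by_same_block Hg Hg I Hk).
      pose proof (contracts_by_mono Hg (Nat.le_add_r k i) I).
      pose proof (proj1 (proj2 (proj2 Hg)) (k + i) I) as Hat. rewrite Hw in Hat.
      apply tr_at_pos in Hat. simpl in Hat. lia. }
    destruct (diverge_transfer Hkz (path_shift Hpi Hk) Hstay) as [sig [Hsig Hcol]].
    exists None, sig, (fun _ => 0). split; [reflexivity|]. split; [exact Hsig|].
    apply contracts_by_const. intros i _. rewrite Hcol. exact Hkz.
Qed.

Lemma tracks_suffix l : w = TFin l -> forall d j z, j + S d = length l -> tracks j z ->
  exists len' sig g', (len = None -> len' = None) /\ path R z len' sig /\
    contracts_by (fun k => C (sig k)) len' (TFin (skipn j l)) g'.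
Proof.
  intros Hw d. induction d as [|d IH]; intros j z Hj Hz;
    pose proof (tracks_colour Hz) as Hat; rewrite Hw in Hat;
    rewrite (skipn_nth_error Hat).
  - rewrite skipn_all2 by lia. apply (tracks_last (l := l)); [exact Hw|].
    replace (length l - 1) with j by lia. exact Hz.
  - destruct (tracks_step (j := j) ltac:(rewrite Hw; simpl; lia) Hz)
      as [n [rho [Hn [Hrho [Hcol Hnext]]]]].
    destruct (IH (S j) (rho n) ltac:(lia) Hnext) as [len' [sig [g' [Hdiv [Hsig Hg']]]]].
    eexists (option_map (Nat.add n) len'), (splice n rho sig), _.
    split; [intros E; rewrite (Hdiv E); reflexivity|].
    split; [exact (path_splice Hrho Hsig)|].
    apply contracts_by_cons; [exact Hn | | |].
    + intros i Hi. rewrite splice_before by exact Hi. exact (Hcol i Hi).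
    + replace (splice n rho sig n) with (sig 0)
        by (rewrite <- (splice_after n rho sig 0), Nat.add_0_r; reflexivity).
      rewrite (proj1 Hsig).
      apply not_eq_sym, (contracts_by_adjacent Hg (tracks_colour Hz) (tracks_colour Hnext)).
    + refine (contracts_by_ext _ Hg'). intros k _. rewrite splice_after. reflexivity.
Qed.

End Tracking.

Lemma fin_trace_transfer x y len pi l g :
  C x = C y -> path R x len pi -> contracts_by (fun k => C (pi k)) len (TFin l) g ->
  exists len' sig g', (len = None -> len' = None) /\ path R y len' sig /\
    contracts_by (fun k => C (sig k)) len' (TFin l) g'.
Proof.
  intros Hxy Hpi Hg. destruct l as [|a l].
  - exfalso. pose proof (proj1 (proj2 (proj2 Hg)) 0 (in_dom_zero len)) as Hat.
    rewrite (proj1 Hg) in Hat. discriminate.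
  - exact (tracks_suffix Hpi Hg eq_refl (d := length l) (j := 0) eq_refl
      (tracks_start Hxy Hpi Hg)).
Qed.

Lemma inf_trace_transfer x y len pi f g :
  C x = C y -> path R x len pi -> contracts_by (fun k => C (pi k)) len (TInf f) g ->
  exists sig g', path R y None sig /\ contracts_by (fun k => C (sig k)) None (TInf f) g'.
Proof.
  intros Hxy Hpi Hg. apply path_of_segments with (P := tracks len pi g).
  - intros j. apply not_eq_sym, (contracts_by_adjacent (w := TInf f) (j := j) Hg); reflexivity.
  - exact (tracks_start Hxy Hpi Hg).
  - intros j z Hz. destruct (tracks_step Hpi Hg I Hz) as [n [rho [Hn [Hrho [Hcol Hnext]]]]].
    exists n, rho. split; [exact Hn | split; [exact Hrho | split; [|exact Hnext]]].
    intros i Hi. rewrite (Hcol i Hi).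
    pose proof (tracks_colour Hg Hz) as Hat. simpl in Hat. congruence.
Qed.

Lemma ctrace_colour_transfer x y w : C x = C y -> ctrace R C x w -> ctrace R C y w.
Proof.
  intros Hxy [len [pi [Hpi [g Hg]]]]. destruct w as [l | f].
  - destruct (fin_trace_transfer Hxy Hpi Hg) as [len' [sig [g' [_ [Hsig Hg']]]]].
    exists len', sig. split; [exact Hsig | exists g'; exact Hg'].
  - destruct (inf_trace_transfer Hxy Hpi Hg) as [sig [g' [Hsig Hg']]].
    exists None, sig. split; [exact Hsig | exists g'; exact Hg'].
Qed.

Lemma divtrace_colour_transfer x y w : C x = C y -> divtrace R C x w -> divtrace R C y w.
Proof.
  intros Hxy [pi [Hpi [[g Hg] [l ->]]]].
  destruct (fin_trace_transfer Hxy Hpi Hg) as [len' [sig [g' [Hdiv [Hsig Hg']]]]].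
  rewrite (Hdiv eq_refl) in Hsig, Hg'.
  exists sig. split; [exact Hsig|]. split; [exists g'; exact Hg' | exists l; reflexivity].
Qed.

End Transfer.

Section Theory.
Variables (AP St : Type) (L : St -> AP -> Prop) (R : St -> St -> Prop).

Definition theory (x : St) : form AP -> Prop := fun phi => sat L R phi x.

Lemma theory_eq_iff x y : theory x = theory y <-> forall phi, sat L R phi x <-> sat L R phi y.
Proof.
  split.
  - intros E phi. pose proof (equal_f E phi) as E'. unfold theory in E'. rewrite E'. reflexivity.
  - intros H. apply functional_extensionality. intro phi.
    apply propositional_extensionality. exact (H phi).
Qed.

Definition distinguishing (z u : St) : form AP :=
  epsilon (inhabits (@FConj AP Empty_set (fun e => match e with end)))
    (fun phi => sat L R phi z /\ ~ sat L R phi u).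

Lemma distinguishing_spec z u :
  theory u <> theory z -> sat L R (distinguishing z u) z /\ ~ sat L R (distinguishing z u) u.
Proof.
  intros Hne. unfold distinguishing. apply epsilon_spec.
  assert (Hphi : ~ forall phi, sat L R phi u <-> sat L R phi z) by (rewrite <- theory_eq_iff; exact Hne).
  apply not_all_ex_not in Hphi. destruct Hphi as [phi Hphi].
  destruct (classic (sat L R phi z)) as [Hz | Hz].
  - exists phi. split; [exact Hz|]. intro Hu. apply Hphi. tauto.
  - exists (FNeg phi). simpl. split; [exact Hz|]. intro Hu. apply Hphi. tauto.
Qed.

(* The infinitary conjunction makes the theory class of [z] definable by one formula. *)
Definition characteristic (z : St) : form AP :=
  @FConj AP {u : St | theory u <> theory z} (fun u => distinguishing z (proj1_sig u)).

Lemma characteristic_spec z u : sat L R (characteristic z) u <-> theory u = theory z.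
Proof.
  simpl. split.
  - intros H. apply NNPP. intro Hne.
    exact (proj2 (distinguishing_spec Hne) (H (exist _ u Hne))).
  - intros E [v Hv]. simpl. apply (proj1 (theory_eq_iff u z) E).
    exact (proj1 (distinguishing_spec Hv)).
Qed.

Lemma theory_until_transfer x y m pi :
  theory x = theory y -> path R x (Some m) pi ->
  (forall i, i < m -> theory (pi i) = theory x) ->
  exists n rho, path R y (Some n) rho /\ theory (rho n) = theory (pi m) /\
    forall i, i < n -> theory (rho i) = theory x.
Proof.
  intros Hxy Hpi Hbefore.
  assert (Hx : sat L R (FEU (characteristic x) (characteristic (pi m))) x).
  { exists m, pi. split; [exact Hpi|]. split.
    - apply characteristic_spec. reflexivity.
    - intros i Hi. apply characteristic_spec. exact (Hbefore i Hi). }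
  apply (proj1 (theory_eq_iff x y) Hxy) in Hx. destruct Hx as [n [rho [Hrho [Hend Hall]]]].
  exists n, rho. split; [exact Hrho|]. split.
  - exact (proj1 (characteristic_spec _ _) Hend).
  - intros i Hi. exact (proj1 (characteristic_spec _ _) (Hall i Hi)).
Qed.

Lemma theory_diverge_transfer x y pi :
  theory x = theory y -> path R x None pi -> (forall k, theory (pi k) = theory x) ->
  exists sig, path R y None sig /\ forall k, theory (sig k) = theory x.
Proof.
  intros Hxy Hpi Hall.
  assert (Hx : sat L R (FEG (characteristic x)) x).
  { exists pi. split; [exact Hpi|]. intro k. apply characteristic_spec. exact (Hall k). }
  apply (proj1 (theory_eq_iff x y) Hxy) in Hx. destruct Hx as [sig [Hsig Hsig_all]].
  exists sig. split; [exact Hsig|]. intro k. exact (proj1 (characteristic_spec _ _) (Hsig_all k)).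
Qed.

Lemma theory_div_preserving : div_preserving L R theory.
Proof.
  split; [intros s t H; split|].
  - intros p. exact (proj1 (theory_eq_iff s t) H (FAtom p)).
  - intros w. split; apply (ctrace_colour_transfer theory_until_transfer theory_diverge_transfer);
      [exact H | exact (eq_sym H)].
  - intros s t H w. split; apply (divtrace_colour_transfer theory_until_transfer theory_diverge_transfer);
      [exact H | exact (eq_sym H)].
Qed.

End Theory.

Theorem theorem7p1 (AP St : Type) (L : St -> AP -> Prop) (R : St -> St -> Prop)
  (s t : St) :
  bbisim_div L R s t <-> (forall phi : form AP, sat L R phi s <-> sat L R phi t).
Proof.
  split.
  - intros [Col [C [HC Hst]]] phi.
    split; apply (sat_colour_invariant HC); [exact Hst | exact (eq_sym Hst)].
  - intros Hst. exists (form AP -> Prop), (theory L R). split.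
    + exact (theory_div_preserving L R).
    + exact (proj2 (theory_eq_iff L R s t) Hst).
Qed.
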